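(* Let $P\subset\mathbb{R}^2\times\{0\}\subset\mathbb{R}^3$ be a Reuleaux polygon of width $1$ with vertices $p_1,\dots,p_n$, so that $P=\bigcap_{i=1}^nB(p_i,1)\cap\{z=0\}$. Let $\bar P=\bigcap_{i=1}^nB(p_i,1)\subset\mathbb{R}^3$ and $P^+=\bar P\cap\{z\ge 0\}$. Then (i) the diameter of $P^+$ is $1$; and (ii) for every point $x\in\partial P^+\cap\{z>0\}$ there is a point $y$ on the boundary of the Reuleaux polygon $P$ (in the plane $z=0$) with $d(x,y)=1$.
   Context: $B(p,1)$ is the closed unit ball in $\mathbb{R}^3$ centered at $p$; $z$ denotes the third coordinate; $d$ is Euclidean distance. A Reuleaux polygon of width $1$ is a planar convex set of constant width $1$ of the form $\bigcap_{i=1}^n D(p_i,1)$ (closed unit disks), where $n\ge 3$ is odd and the points $p_1,\dots,p_n$ are exactly its vertices (corner points of its boundary); its boundary consists of unit-radius circular arcs centered at the vertices. *)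

From Stdlib Require Import Reals Lra Lia.
Open Scope R_scope.

Definition R2 : Type := (R * R)%type.
Definition R3 : Type := (R * R * R)%type.

Definition dot2 (a b : R2) : R := fst a * fst b + snd a * snd b.
Definition sub2 (a b : R2) : R2 := (fst a - fst b, snd a - snd b).
Definition dist2 (a b : R2) : R := sqrt (dot2 (sub2 a b) (sub2 a b)).

Definition dist3 (a b : R3) : R :=
  let '(a1, a2, a3) := a in let '(b1, b2, b3) := b in
  sqrt ((a1 - b1)^2 + (a2 - b2)^2 + (a3 - b3)^2).

Definition zc (x : R3) : R := snd x.

Definition emb (a : R2) : R3 := (fst a, snd a, 0).

Definition boundary2 (S : R2 -> Prop) (x : R2) : Prop :=
  forall eps, 0 < eps ->
    (exists y, S y /\ dist2 x y < eps) /\ (exists y, ~ S y /\ dist2 x y < eps).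
Definition boundary3 (S : R3 -> Prop) (x : R3) : Prop :=
  forall eps, 0 < eps ->
    (exists y, S y /\ dist3 x y < eps) /\ (exists y, ~ S y /\ dist3 x y < eps).

Definition convex2 (S : R2 -> Prop) : Prop :=
  forall x y t, S x -> S y -> 0 <= t <= 1 ->
    S (t * fst x + (1 - t) * fst y, t * snd x + (1 - t) * snd y).

Definition const_width2 (S : R2 -> Prop) (w : R) : Prop :=
  forall u : R2, dot2 u u = 1 ->
    is_lub (fun r => exists x y, S x /\ S y /\ r = dot2 (sub2 x y) u) w.

(* corner point of the boundary: a boundary point admitting two distinct
   outer unit normals of supporting lines *)
Definition is_vertex2 (S : R2 -> Prop) (x : R2) : Prop :=
  S x /\ boundary2 S x /\
  exists u v : R2, dot2 u u = 1 /\ dot2 v v = 1 /\ u <> v /\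
    (forall y, S y -> dot2 (sub2 y x) u <= 0) /\
    (forall y, S y -> dot2 (sub2 y x) v <= 0).

Definition disk_inter (n : nat) (p : nat -> R2) (x : R2) : Prop :=
  forall i, (i < n)%nat -> dist2 x (p i) <= 1.

Definition reuleaux_polygon (n : nat) (p : nat -> R2) : Prop :=
  (3 <= n)%nat /\ Nat.Odd n /\
  (forall i j, (i < n)%nat -> (j < n)%nat -> p i = p j -> i = j) /\
  convex2 (disk_inter n p) /\
  const_width2 (disk_inter n p) 1 /\
  (forall x, is_vertex2 (disk_inter n p) x <-> exists i, (i < n)%nat /\ x = p i).

Definition Pbar (n : nat) (p : nat -> R2) (x : R3) : Prop :=
  forall i, (i < n)%nat -> dist3 x (emb (p i)) <= 1.

Definition Pplus_set (n : nat) (p : nat -> R2) (x : R3) : Prop :=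
  Pbar n p x /\ 0 <= zc x.

Definition diameter_is (S : R3 -> Prop) (d : R) : Prop :=
  is_lub (fun r => exists x y, S x /\ S y /\ r = dist3 x y) d.

(* A point of P^+ at height h projects into the disks of radius sqrt (1 - h^2)
   around all vertices.  Constant width forces the whole of P into the disk of
   that radius around the projection, so the highest of two points of P^+ is
   within distance 1 of the other: the diameter of P^+ is 1.  A point of the
   boundary of P^+ above the plane cannot lie strictly inside all the balls
   (it would be interior), so it is at distance 1 from some vertex p_i, and
   every vertex is a boundary point of P. *)

From Stdlib Require Import Reals Lra Lia Psatz Classical.
Open Scope R_scope.

Lemma sqrt_sum3_sq_triangle u1 u2 u3 v1 v2 v3 :
  sqrt ((u1 + v1)^2 + (u2 + v2)^2 + (u3 + v3)^2) <=
  sqrt (u1^2 + u2^2 + u3^2) + sqrt (v1^2 + v2^2 + v3^2).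
Proof.
  set (nu := sqrt (u1^2 + u2^2 + u3^2)).
  set (nv := sqrt (v1^2 + v2^2 + v3^2)).
  assert (Hnu : nu * nu = u1^2 + u2^2 + u3^2) by (apply sqrt_sqrt; nra).
  assert (Hnv : nv * nv = v1^2 + v2^2 + v3^2) by (apply sqrt_sqrt; nra).
  assert (nu_ge0 : 0 <= nu) by apply sqrt_pos.
  assert (nv_ge0 : 0 <= nv) by apply sqrt_pos.
  assert (cauchy_schwarz : u1*v1 + u2*v2 + u3*v3 <= nu * nv).
  { assert (Lagrange : (nu * nv)^2 - (u1*v1 + u2*v2 + u3*v3)^2 =
      (u1*v2 - u2*v1)^2 + (u1*v3 - u3*v1)^2 + (u2*v3 - u3*v2)^2).
    { replace ((nu * nv)^2) with ((nu * nu) * (nv * nv)) by ring.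
      rewrite Hnu, Hnv; ring. }
    assert (0 <= (u1*v2 - u2*v1)^2 + (u1*v3 - u3*v1)^2 + (u2*v3 - u3*v2)^2).
    { pose proof (pow2_ge_0 (u1*v2 - u2*v1)); pose proof (pow2_ge_0 (u1*v3 - u3*v1));
        pose proof (pow2_ge_0 (u2*v3 - u3*v2)); lra. }
    assert (0 <= nu * nv) by (apply Rmult_le_pos; assumption).
    nra. }
  rewrite <- (sqrt_pow2 (nu + nv)) by lra.
  apply sqrt_le_1_alt; nra.
Qed.

Lemma dist3_sym (a b : R3) : dist3 a b = dist3 b a.
Proof.
  destruct a as [[a1 a2] a3], b as [[b1 b2] b3]; simpl; f_equal; ring.
Qed.

Lemma dist3_triangle (a b c : R3) : dist3 a c <= dist3 a b + dist3 b c.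
Proof.
  destruct a as [[a1 a2] a3], b as [[b1 b2] b3], c as [[c1 c2] c3]; simpl.
  replace (a1 - c1) with ((a1 - b1) + (b1 - c1)) by ring.
  replace (a2 - c2) with ((a2 - b2) + (b2 - c2)) by ring.
  replace (a3 - c3) with ((a3 - b3) + (b3 - c3)) by ring.
  apply sqrt_sum3_sq_triangle.
Qed.

Lemma dot2_self_ge0 (v : R2) : 0 <= dot2 v v.
Proof. unfold dot2; nra. Qed.

Lemma dist2_ge0 (a b : R2) : 0 <= dist2 a b.
Proof. apply sqrt_pos. Qed.

Lemma dist2_sq (a b : R2) : dist2 a b ^ 2 = dot2 (sub2 a b) (sub2 a b).
Proof. apply pow2_sqrt, dot2_self_ge0. Qed.

Lemma dist3_pythagoras (a b : R3) :
  dist3 a b = sqrt (dist2 (fst a) (fst b) ^ 2 + (zc a - zc b) ^ 2).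
Proof.
  rewrite dist2_sq.
  destruct a as [[a1 a2] a3], b as [[b1 b2] b3]; unfold dot2, sub2, zc; simpl.
  f_equal; ring.
Qed.

Lemma dist3_emb (a b : R2) : dist3 (emb a) (emb b) = dist2 a b.
Proof.
  rewrite dist3_pythagoras; unfold zc, emb; cbn [fst snd].
  destruct a as [a1 a2], b as [b1 b2]; cbn [fst snd].
  replace (dist2 (a1, a2) (b1, b2) ^ 2 + (0 - 0) ^ 2) with (dist2 (a1, a2) (b1, b2) ^ 2) by ring.
  apply sqrt_pow2, dist2_ge0.
Qed.

Lemma dist2_fst_le_dist3 (a b : R3) : dist2 (fst a) (fst b) <= dist3 a b.
Proof.
  rewrite dist3_pythagoras.
  rewrite <- (sqrt_pow2 (dist2 (fst a) (fst b))) at 1 by apply dist2_ge0.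
  apply sqrt_le_1_alt; pose proof (pow2_ge_0 (zc a - zc b)); nra.
Qed.

Lemma Rabs_zc_le_dist3 (a b : R3) : Rabs (zc a - zc b) <= dist3 a b.
Proof.
  rewrite dist3_pythagoras, <- sqrt_Rsqr_abs.
  apply sqrt_le_1_alt; unfold Rsqr.
  pose proof (pow2_ge_0 (dist2 (fst a) (fst b))); nra.
Qed.

Lemma dist2_triangle (a b c : R2) : dist2 a c <= dist2 a b + dist2 b c.
Proof. rewrite <- !dist3_emb; apply dist3_triangle. Qed.

Lemma dist2_translate (a v : R2) k : 0 <= k ->
  dist2 (fst a + k * fst v, snd a + k * snd v) a = k * sqrt (dot2 v v).
Proof.
  intros Hk; unfold dist2, sub2, dot2; simpl.
  replace ((fst a + k * fst v - fst a) * (fst a + k * fst v - fst a) +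
           (snd a + k * snd v - snd a) * (snd a + k * snd v - snd a))
    with (k ^ 2 * (fst v * fst v + snd v * snd v)) by ring.
  rewrite sqrt_mult_alt, sqrt_pow2 by nra; reflexivity.
Qed.

Lemma fst_sub_le_dist2 (a b : R2) : fst a - fst b <= dist2 a b.
Proof.
  eapply Rle_trans; [apply Rle_abs|].
  rewrite <- sqrt_Rsqr_abs; apply sqrt_le_1_alt.
  unfold Rsqr, dot2, sub2; cbn [fst snd].
  pose proof (Rle_0_sqr (snd a - snd b)); unfold Rsqr in *; lra.
Qed.

Lemma const_width2_ge0 S w : const_width2 S w -> forall c, S c -> 0 <= w.
Proof.
  intros Hw c Hc.
  assert (Hu : dot2 (1, 0) (1, 0) = 1) by (unfold dot2; simpl; ring).
  destruct (Hw _ Hu) as [Hub _].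
  replace 0 with (dot2 (sub2 c c) (1, 0)) by (unfold dot2, sub2; simpl; ring).
  apply Hub; exists c, c; auto.
Qed.

(* The width in the direction of c - d bounds |c - d|. *)
Lemma const_width2_dist2_le S w c d :
  const_width2 S w -> S c -> S d -> dist2 c d <= w.
Proof.
  intros Hw Hc Hd.
  set (s := dist2 c d); set (v := sub2 c d).
  assert (Hss : fst v * fst v + snd v * snd v = s * s).
  { unfold s, dist2; rewrite sqrt_sqrt by apply dot2_self_ge0; reflexivity. }
  destruct (Req_dec s 0) as [Hs0 | Hs0].
  { rewrite Hs0; exact (const_width2_ge0 S w Hw c Hc). }
  assert (Hs : 0 < s) by (assert (0 <= s) by apply dist2_ge0; lra).
  set (u := (fst v / s, snd v / s)).
  assert (Hdot : dot2 v u = s).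
  { unfold u, dot2; cbn [fst snd].
    replace (fst v * (fst v / s) + snd v * (snd v / s))
      with ((fst v * fst v + snd v * snd v) / s) by (field; lra).
    rewrite Hss; field; lra. }
  assert (Hu : dot2 u u = 1).
  { unfold u, dot2; cbn [fst snd].
    replace (fst v / s * (fst v / s) + snd v / s * (snd v / s))
      with ((fst v * fst v + snd v * snd v) / (s * s)) by (field; lra).
    rewrite Hss; field; lra. }
  destruct (Hw u Hu) as [Hub _].
  rewrite <- Hdot; apply Hub; exists c, d; auto.
Qed.

(* Push a away from b by 1 - r: the new point is still in P, so its distance
   |a - b| + 1 - r to b is at most the diameter 1. *)
Lemma dist2_le_of_vertices_within n p a b r :
  const_width2 (disk_inter n p) 1 -> 0 <= r <= 1 ->
  (forall i, (i < n)%nat -> dist2 a (p i) <= r) ->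
  disk_inter n p b -> dist2 a b <= r.
Proof.
  intros Hw Hr Ha Hb.
  set (s := dist2 a b).
  assert (Hs_ge0 : 0 <= s) by apply dist2_ge0.
  destruct (Req_dec s 0) as [Hs0 | Hs0]; [lra|].
  set (t := (1 - r) / s).
  assert (Ht : 0 <= t) by (apply Rmult_le_pos; [lra | left; apply Rinv_0_lt_compat; lra]).
  set (z := (fst a + t * fst (sub2 a b), snd a + t * snd (sub2 a b))).
  assert (Hza : dist2 z a = 1 - r).
  { unfold z; rewrite dist2_translate by exact Ht; fold (dist2 a b) s.
    unfold t; field; lra. }
  assert (Hz : disk_inter n p z).
  { intros i Hi; pose proof (dist2_triangle z a (p i)); pose proof (Ha i Hi); lra. }
  assert (Hzb : dist2 z b = (1 + t) * s).
  { replace z with (fst b + (1 + t) * fst (sub2 a b), snd b + (1 + t) * snd (sub2 a b))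
      by (unfold z, sub2; simpl; f_equal; ring).
    apply dist2_translate; lra. }
  pose proof (const_width2_dist2_le _ _ _ _ Hw Hz Hb) as Hdiam.
  assert (Hts : t * s = 1 - r) by (unfold t; field; lra).
  lra.
Qed.

Lemma Pbar_dist2_sq_le n p x i : Pbar n p x -> (i < n)%nat ->
  dist2 (fst x) (p i) ^ 2 + zc x ^ 2 <= 1.
Proof.
  intros Hx Hi.
  specialize (Hx i Hi); rewrite dist3_pythagoras in Hx.
  replace (fst (emb (p i))) with (p i) in Hx by (destruct (p i); reflexivity).
  replace (zc x - zc (emb (p i))) with (zc x) in Hx by (unfold zc, emb; simpl; ring).
  apply sqrt_le_0; [nra | lra | now rewrite sqrt_1].
Qed.

Lemma Pbar_fst n p x : Pbar n p x -> disk_inter n p (fst x).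
Proof.
  intros Hx i Hi.
  replace (p i) with (fst (emb (p i))) by (destruct (p i); reflexivity).
  eapply Rle_trans; [apply dist2_fst_le_dist3 | exact (Hx i Hi)].
Qed.

Lemma Pplus_dist3_le_1 n p x y : (0 < n)%nat ->
  const_width2 (disk_inter n p) 1 ->
  Pplus_set n p x -> Pplus_set n p y -> zc y <= zc x -> dist3 x y <= 1.
Proof.
  intros Hn Hw [Hx Hx0] [Hy Hy0] Hxy.
  assert (Hzx : zc x ^ 2 <= 1).
  { pose proof (Pbar_dist2_sq_le n p x 0 Hx Hn); nra. }
  set (r := sqrt (1 - zc x ^ 2)).
  assert (Hr2 : r ^ 2 = 1 - zc x ^ 2) by (apply pow2_sqrt; lra).
  assert (Hr : 0 <= r <= 1).
  { split; [apply sqrt_pos|]; rewrite <- sqrt_1; apply sqrt_le_1_alt; nra. }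
  assert (Hvert : forall i, (i < n)%nat -> dist2 (fst x) (p i) <= r).
  { intros i Hi; pose proof (Pbar_dist2_sq_le n p x i Hx Hi).
    rewrite <- (sqrt_pow2 (dist2 _ _)) by apply dist2_ge0.
    apply sqrt_le_1_alt; lra. }
  pose proof (dist2_le_of_vertices_within n p (fst x) (fst y) r Hw Hr Hvert
                (Pbar_fst n p y Hy)) as Hd.
  pose proof (dist2_ge0 (fst x) (fst y)).
  rewrite dist3_pythagoras, <- sqrt_1; apply sqrt_le_1_alt; nra.
Qed.

Lemma diameter_ge_width S T w b :
  const_width2 S w -> (forall c, S c -> T (emb c)) ->
  is_upper_bound (fun r => exists x y, T x /\ T y /\ r = dist3 x y) b ->
  w <= b.
Proof.
  intros Hw HST Hb.
  assert (Hu : dot2 (1, 0) (1, 0) = 1) by (unfold dot2; simpl; ring).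
  destruct (Hw _ Hu) as [_ Hlub]; apply Hlub.
  intros r (c & d & Hc & Hd & ->).
  replace (dot2 (sub2 c d) (1, 0)) with (fst c - fst d) by (unfold dot2, sub2; simpl; ring).
  eapply Rle_trans; [apply fst_sub_le_dist2|].
  rewrite <- dist3_emb; apply Hb; exists (emb c), (emb d); auto.
Qed.

Lemma boundary3_dist3_le S c rho x :
  (forall y, S y -> dist3 y c <= rho) -> boundary3 S x -> dist3 x c <= rho.
Proof.
  intros HS Hx.
  destruct (Rle_or_lt (dist3 x c) rho) as [|Hgt]; [assumption | exfalso].
  destruct (Hx (dist3 x c - rho)) as [(y & Hy & Hxy) _]; [lra|].
  pose proof (HS y Hy); pose proof (dist3_triangle x y c); lra.
Qed.

Lemma finite_strict_upper_bound (f : nat -> R) n :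
  (forall i, (i < n)%nat -> f i < 1) ->
  exists m, m < 1 /\ forall i, (i < n)%nat -> f i <= m.
Proof.
  induction n as [|n IH]; intros Hf.
  - exists 0; split; [lra | intros; lia].
  - destruct IH as (m & Hm & Hle); [intros; apply Hf; lia|].
    exists (Rmax m (f n)); split.
    + apply Rmax_lub_lt; [exact Hm | apply Hf; lia].
    + intros i Hi; destruct (Nat.eq_dec i n) as [->|Hne]; [apply Rmax_r|].
      eapply Rle_trans; [apply Hle; lia | apply Rmax_l].
Qed.

Lemma Pplus_interior n p x : 0 < zc x ->
  (forall i, (i < n)%nat -> dist3 x (emb (p i)) < 1) ->
  ~ boundary3 (Pplus_set n p) x.
Proof.
  intros Hz Hlt Hx.
  destruct (finite_strict_upper_bound (fun i => dist3 x (emb (p i))) n Hlt)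
    as (m & Hm & Hle).
  assert (Heps : 0 < Rmin (zc x) (1 - m)) by (apply Rmin_glb_lt; lra).
  pose proof (Rmin_l (zc x) (1 - m)); pose proof (Rmin_r (zc x) (1 - m)).
  destruct (Hx _ Heps) as [_ (y & Hy & Hxy)]; apply Hy; split.
  - intros i Hi; pose proof (Hle i Hi).
    pose proof (dist3_triangle y x (emb (p i))); rewrite (dist3_sym y x) in *.
    cbn beta in *; lra.
  - pose proof (Rabs_zc_le_dist3 x y); pose proof (Rle_abs (zc x - zc y)); lra.
Qed.

Theorem lemma1 (n : nat) (p : nat -> R2) :
  reuleaux_polygon n p ->
  diameter_is (Pplus_set n p) 1 /\
  (forall x : R3, boundary3 (Pplus_set n p) x -> 0 < zc x ->
     exists y : R2, boundary2 (disk_inter n p) y /\ dist3 x (emb y) = 1).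
Proof.
  intros (Hn & _ & _ & _ & Hw & Hvert).
  split.
  - split.
    + intros r (x & y & Hx & Hy & ->).
      destruct (Rle_dec (zc y) (zc x)).
      * apply (Pplus_dist3_le_1 n p); [lia | assumption ..].
      * rewrite dist3_sym; apply (Pplus_dist3_le_1 n p); [lia | assumption .. | lra].
    + intros b Hb; apply (diameter_ge_width _ (Pplus_set n p) _ _ Hw); [|exact Hb].
      intros c Hc; split; [intros i Hi; rewrite dist3_emb; auto | unfold zc, emb; simpl; lra].
  - intros x Hx Hz.
    destruct (classic (exists i, (i < n)%nat /\ dist3 x (emb (p i)) = 1))
      as [(i & Hi & Hxi) | Hnone].
    + exists (p i); split; [|exact Hxi].
      destruct (proj2 (Hvert (p i)) (ex_intro _ i (conj Hi eq_refl))) as (_ & Hbd & _).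
      exact Hbd.
    + exfalso; apply (Pplus_interior n p x Hz); [|exact Hx].
      intros i Hi.
      assert (Hle : dist3 x (emb (p i)) <= 1).
      { apply (boundary3_dist3_le (Pplus_set n p)); [|exact Hx].
        intros y [Hy _]; exact (Hy i Hi). }
      destruct (Rle_lt_or_eq_dec _ _ Hle) as [|Heq]; [assumption|].
      exfalso; apply Hnone; eauto.
Qed.
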